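(* Let $n$, $k$, $t$, $s$ be positive integers with $k\geq t+1$ and $n\geq 2k$, and let $V$ be an $n$-dimensional vector space over $\mathbb{F}_q$. Suppose $\mathcal{F}\subseteq{V\brack k}$ is almost $t$-intersecting and $S\in{V\brack s}$. If there exists $F\in\mathcal{F}$ with $\dim(F\cap S)=m<t$, then there is $R\in{V\brack s+t-m}$ with $S\subseteq R$ such that $$|\mathcal{F}_S|\leq{k-t+1\brack 1}^{t-m}|\mathcal{F}_R|+1.$$
   Context: $q$ is a prime power; ${W\brack k}$ is the set of $k$-dimensional subspaces of $W$ and ${m\brack r}$ the Gaussian binomial coefficient $\prod_{i=0}^{r-1}\frac{q^{m-i}-1}{q^{r-i}-1}$. A family $\mathcal{F}\subseteq{V\brack k}$ is almost $t$-intersecting if for each $F\in\mathcal{F}$ there is at most one $F'\in\mathcal{F}$ with $\dim(F\cap F')<t$. For a subspace $A$ of $V$, $\mathcal{F}_A=\{F\in\mathcal{F}: A\subseteq F\}$. *)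

From mathcomp Require Import all_boot all_algebra all_field.
From mathcomp Require Export finmap.
Set Implicit Arguments. Unset Strict Implicit. Unset Printing Implicit Defensive.
Open Scope fset_scope.

(* Gaussian binomial coefficient [m brack r]_q
   = prod_{i<r} (q^(m-i) - 1) / (q^(r-i) - 1); the quotient of the two
   products is an exact natural-number division. *)
Definition qbinom (q m r : nat) : nat :=
  (\prod_(i < r) (q ^ (m - i) - 1)) %/ (\prod_(i < r) (q ^ (r - i) - 1)).

Definition subfam (K : fieldType) (vT : vectType K)
  (Fam : {fset {vspace vT}}) (A : {vspace vT}) : {fset {vspace vT}} :=
  [fset X in Fam | (A <= X)%VS].

Definition almost_t_intersecting (K : fieldType) (vT : vectType K)
  (Fam : {fset {vspace vT}}) (t : nat) : Prop :=
  forall A, A \in Fam -> #|` [fset B in Fam | \dim (A :&: B) < t] | <= 1.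

From mathcomp Require Import all_boot all_algebra all_field.
From mathcomp Require Import finmap zify.
Set Implicit Arguments. Unset Strict Implicit. Unset Printing Implicit Defensive.
Open Scope fset_scope.
Import GRing.Theory.

(* Fix X in Fam with dim (X :&: S) = m. As Fam is almost t-intersecting, all
   members of Fam but at most one meet X in dimension at least t.  Grow S one
   vector of X at a time: when T meets X in dimension d < t, choose W <= X of
   dimension k - t + 1 with W :&: T = 0.  Every such member G containing T
   meets W nontrivially, since dim (X :&: G) + dim W > k, so it contains at
   least q - 1 nonzero vectors of W.  Double counting the pairs (G, x) with
   0 <> x in G :&: W gives a nonzero x in W such that, counting only these
   members, (q - 1) |F_T| <= (q ^ (k - t + 1) - 1) |F_(T + <[x]>)|.
   After t - m steps T has dimension s + t - m and meets X in dimension t. *)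

Section Subspaces.
Variables (K : fieldType) (vT : vectType K).
Implicit Types (Fam : {fset {vspace vT}}) (A T U V W X : {vspace vT}) (x : vT).

Lemma dimv_add_line U x : x \notin U -> \dim (U + <[x]>) = (\dim U).+1.
Proof.
move=> xNU; have x_neq0 : x != 0%R by apply: contraNneq xNU => ->; apply: mem0v.
have : \dim (U :&: <[x]>) < \dim <[x]>.
  rewrite ltn_neqAle dimvS ?capvSr // andbT; apply: contra xNU => dim_eq.
  have /eqP eq_cap : (U :&: <[x]> == <[x]>)%VS.
    by rewrite eqEdim capvSr (eqP dim_eq) /=.
  by rewrite memvE -eq_cap capvSl.
rewrite dim_vline x_neq0 ltnS leqn0 => /eqP dim_cap0.
by have := dimv_sum_cap U <[x]>; rewrite dim_cap0 dim_vline x_neq0 addn0 addn1.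
Qed.

Lemma exists_subv_dim U j : j <= \dim U -> exists2 W, (W <= U)%VS & \dim W = j.
Proof.
move=> leq_jU; pose B := take j (vbasis U).
have freeB : free B.
  apply: (@catl_free _ _ (drop j (vbasis U))).
  by rewrite cat_take_drop (basis_free (vbasisP U)).
exists <<B>>%VS; first by apply/span_subvP => v /mem_take; apply: vbasis_mem.
by rewrite (eqP freeB) size_takel ?size_tuple.
Qed.

Lemma exists_subv_disjoint X T j : j + \dim (X :&: T) <= \dim X ->
  exists W, [/\ (W <= X)%VS, (W :&: T = 0)%VS & \dim W = j].
Proof.
rewrite -(dimv_cap_compl X T) addnC leq_add2l.
move=> /exists_subv_dim [W sub_W dim_W].
exists W; split=> //; first exact: subv_trans sub_W (diffvSl _ _).
by apply/eqP; rewrite -subv0 -(capv_diff X T) capvS.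
Qed.

Lemma dimv_cap_ge X U V : (U <= X)%VS -> (V <= X)%VS ->
  \dim U + \dim V <= \dim X + \dim (U :&: V).
Proof.
by move=> sUX sVX; rewrite -dimv_sum_cap leq_add2r dimvS // subv_add sUX.
Qed.

Lemma dimv_cap_add_line T X x : x \notin T -> x \in X ->
  \dim ((T + <[x]>) :&: X) = (\dim (T :&: X)).+1.
Proof.
move=> xNT xX; have := dimv_sum_cap (T + <[x]>) X; have := dimv_sum_cap T X.
have -> : (T + <[x]> + X = T + X)%VS.
  by rewrite -addvA; congr (_ + _)%VS; apply/addv_idPr; rewrite -memvE.
rewrite dimv_add_line //; lia.
Qed.

Lemma subfam_add_line Fam T x :
  subfam Fam (T + <[x]>) = [fset G in subfam Fam T | x \in G].
Proof. by apply/fsetP => G; rewrite !inE subv_add -memvE andbA. Qed.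

Lemma vsproj_eq0 U x : x \in U -> (vsproj U x == 0%R) = (x == 0%R).
Proof.
move=> xU; apply/eqP/eqP => [x'0 | ->]; last exact: linear0.
by rewrite -(vsprojK xU) x'0 linear0.
Qed.

Lemma subfamS Fam1 Fam2 A : Fam1 `<=` Fam2 -> subfam Fam1 A `<=` subfam Fam2 A.
Proof.
move=> /fsubsetP sub12; apply/fsubsetP => G.
by rewrite !inE => /andP [/sub12 -> ->].
Qed.

Lemma almost_t_intersecting_card_subfam Fam t X A :
    almost_t_intersecting Fam t -> X \in Fam ->
  #|` subfam Fam A| <= #|` subfam [fset G in Fam | t <= \dim (X :&: G)] A| + 1.
Proof.
move=> almostF FamX; apply: leq_trans (leq_add (leqnn _) (almostF X FamX)).
apply: leq_trans (leq_card_fsetU _ _); apply: fsubset_leq_card.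
apply/fsubsetP => G; rewrite !inE => /andP [FamG sAG].
by rewrite FamG sAG andbT; case: leqP.
Qed.

End Subspaces.

Lemma mul_pred_qbinom1 q a : q.-1 * qbinom q a 1 = (q ^ a).-1.
Proof.
rewrite /qbinom !big_ord1 !subn0 expn1 !subn1 predn_exp.
by case: q => [|[|q]] //=; rewrite mulKn.
Qed.

Lemma exists_sum_le_card_mul (I : finType) (P : pred I) (f : I -> nat) i0 :
  P i0 -> exists2 i, P i & \sum_(j | P j) f j <= #|[set j | P j]| * f i.
Proof.
case/(arg_maxnP f) => i Pi max_i; exists i => //.
rewrite -sum1dep_card big_distrl /=.
by apply: leq_sum => j Pj; rewrite mul1n; apply: max_i.
Qed.

Section FiniteField.
Variables (K : finFieldType) (vT : vectType K).
Implicit Types (Fam : {fset {vspace vT}}) (T W G : {vspace vT}).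
Local Notation vecs W := (finvect_type (subvs_of W)).

Lemma card_vecs W : #|vecs W| = #|K| ^ \dim W.
Proof.
transitivity #|(fullv : {vspace vecs W})|; first by rewrite card_vspacef.
by rewrite card_vspace dimvf.
Qed.

Lemma card_nonzero_vecs_in_ge W G : (W :&: G)%VS != 0%VS ->
  #|K|.-1 <= #|[set x : vecs W | (x != 0%R) && (vsval x \in G)]|.
Proof.
move=> WG_neq0; have := memv_pick (W :&: G)%VS.
rewrite memv_cap => /andP [wW wG].
set w := vpick _ in wW wG; have w_neq0 : w != 0%R by rewrite vpick0.
pose w' : vecs W := vsproj W w.
have w'_neq0 : w' != 0%R by rewrite vsproj_eq0.
have scale_inj : {in [set~ 0%R] &, injective (fun c : K => (c *: w')%R)}.
  move=> c d _ _ /eqP; rewrite -subr_eq0 -scalerBl scaler_eq0 (negPf w'_neq0).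
  by rewrite orbF subr_eq0 => /eqP.
rewrite -(cardsC1 (0%R : K)) -(card_in_imset scale_inj); apply: subset_leq_card.
apply/subsetP => y /imsetP [c]; rewrite in_setC1 => c_neq0 ->; rewrite inE.
by rewrite scaler_eq0 negb_or c_neq0 w'_neq0 linearZ /= vsprojK // memvZ.
Qed.

Lemma sum_card_vecs_in Fam T W :
  \sum_(G <- subfam Fam T) #|[set x : vecs W | (x != 0%R) && (vsval x \in G)]|
  = \sum_(x : vecs W | x != 0%R) #|` subfam Fam (T + <[vsval x]>)|.
Proof.
under eq_bigr => G _ do rewrite -sum1dep_card.
rewrite (exchange_big_dep (fun x : vecs W => x != 0%R)) //=; last first.
  by move=> G x _ /andP [].
apply: eq_bigr => x x_neq0.
rewrite subfam_add_line card_fset_sum1 -big_fset_condE.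
by apply: eq_bigl => G; rewrite x_neq0.
Qed.

Lemma exists_line_extension Fam T W : 0 < \dim W ->
    (forall G, G \in subfam Fam T -> (W :&: G)%VS != 0%VS) ->
  exists2 x, (x \in W) && (x != 0%R) &
    #|K|.-1 * #|` subfam Fam T|
      <= (#|K| ^ \dim W).-1 * #|` subfam Fam (T + <[x]>)|.
Proof.
move=> dimW_gt0 meetW.
have x0_neq0 : vsproj W (vpick W) != 0%R :> vecs W.
  by rewrite vsproj_eq0 ?memv_pick // vpick0 -dimv_eq0 -lt0n.
have [x x_neq0 max_x] := @exists_sum_le_card_mul _ (fun x => x != 0%R)
  (fun x : vecs W => #|` subfam Fam (T + <[vsval x]>)|) _ x0_neq0.
exists (vsval x); first by rewrite subvsP (raddf_eq0 _ subvs_inj) x_neq0.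
have card_nonzero : #|[set x : vecs W | x != 0%R]| = (#|K| ^ \dim W).-1.
  rewrite -card_vecs -(cardsC1 (0%R : vecs W)).
  by apply: eq_card => y; rewrite !inE.
rewrite card_nonzero -sum_card_vecs_in in max_x; apply: leq_trans max_x.
rewrite card_fset_sum1 big_distrr /= big_seq [leqRHS]big_seq.
by apply: leq_sum => G FamG; rewrite muln1 card_nonzero_vecs_in_ge ?meetW.
Qed.

End FiniteField.

Section Extension.
Variables (K : finFieldType) (vT : vectType K).
Variables (Fam : {fset {vspace vT}}) (X : {vspace vT}) (t : nat).
Hypothesis meetX : forall G, G \in Fam -> t <= \dim (X :&: G).
Hypothesis t_le_dimX : t <= \dim X.

Lemma subfam_extend_line T : \dim (T :&: X) < t ->
  exists T', [/\ (T <= T')%VS, \dim T' = (\dim T).+1,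
    \dim (T' :&: X) = (\dim (T :&: X)).+1 &
    #|` subfam Fam T| <= qbinom #|K| (\dim X - t + 1) 1 * #|` subfam Fam T'|].
Proof.
move=> dimTX_lt; set a := (\dim X - t + 1)%N.
have [W [sWX WT0 dimW]] :
    exists W, [/\ (W <= X)%VS, (W :&: T = 0)%VS & \dim W = a].
  by apply: exists_subv_disjoint; rewrite capvC /a; lia.
have meetW G : G \in subfam Fam T -> (W :&: G)%VS != 0%VS.
  rewrite inE => /andP [FamG _]; rewrite -dimv_eq0 -lt0n.
  have sub_cap : (X :&: G :&: W <= W :&: G)%VS by rewrite capvC capvS ?capvSr.
  have := dimvS sub_cap; have := dimv_cap_ge (capvSl X G) sWX.
  have := meetX FamG; rewrite dimW /a; lia.
have [|x /andP [xW x_neq0] count_x] := exists_line_extension (T := T) _ meetW.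
  by rewrite dimW /a addn1.
have xNT : x \notin T.
  by apply: contra x_neq0 => xT; rewrite -memv0 -WT0 memv_cap xW.
have xX : x \in X by apply: subvP sWX x xW.
exists (T + <[x]>)%VS; split.
- exact: addvSl.
- exact: dimv_add_line.
- exact: dimv_cap_add_line.
- have q1_gt0 : 0 < #|K|.-1 by rewrite -subn1 subn_gt0 card_finNzRing_gt1.
  by rewrite -(leq_pmul2l q1_gt0) mulnA mul_pred_qbinom1 -dimW.
Qed.

Lemma subfam_extend i T : \dim (T :&: X) + i <= t ->
  exists T', [/\ (T <= T')%VS, \dim T' = (\dim T + i)%N &
    #|` subfam Fam T|
      <= qbinom #|K| (\dim X - t + 1) 1 ^ i * #|` subfam Fam T'|].
Proof.
elim: i T => [|i IHi] T dimTX.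
  by exists T; rewrite addn0 expn0 mul1n subvv.
have [|T1 [sTT1 dimT1 dimT1X countT1]] := subfam_extend_line (T := T); first lia.
have [|T2 [sT1T2 dimT2 countT2]] := IHi T1; first by rewrite dimT1X; lia.
exists T2; split.
- exact: subv_trans sT1T2.
- by rewrite dimT2 dimT1 addSnnS.
- rewrite expnS -mulnA; apply: leq_trans countT1 _.
  by rewrite leq_mul2l countT2 orbT.
Qed.

End Extension.

Unset Implicit Arguments.
Set Strict Implicit.

Theorem lemma3p2 (K : finFieldType) (vT : vectType K) (n k t s : nat)
  (Fam : {fset {vspace vT}}) (S : {vspace vT}) (m : nat) :
  0 < n -> 0 < k -> 0 < t -> 0 < s ->
  t + 1 <= k -> 2 * k <= n ->
  \dim (fullv : {vspace vT}) = n ->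
  (forall X, X \in Fam -> \dim X = k) ->
  almost_t_intersecting Fam t ->
  \dim S = s ->
  (exists2 X, X \in Fam & \dim (X :&: S) = m) ->
  m < t ->
  exists R : {vspace vT},
    [/\ \dim R = s + t - m, (S <= R)%VS &
        #|` subfam Fam S| <= (qbinom #|K| (k - t + 1) 1) ^ (t - m) * #|` subfam Fam R| + 1].
Proof.
move=> _ _ _ _ lt_tk _ _ dimFam almostF dimS [X FamX dimXS] lt_mt.
pose Good := [fset G in Fam | t <= \dim (X :&: G)].
have meetX G : G \in Good -> t <= \dim (X :&: G) by rewrite inE => /andP [].
have t_le_dimX : t <= \dim X by rewrite dimFam //; lia.
have [|R [sSR dimR countR]] := subfam_extend meetX t_le_dimX (i := t - m) (T := S).
  by rewrite capvC dimXS; lia.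
exists R; split=> //; first by rewrite dimR dimS; lia.
apply: leq_trans (almost_t_intersecting_card_subfam S almostF FamX) _; rewrite leq_add2r.
apply: leq_trans countR _; by rewrite dimFam // leq_mul2l fsubset_leq_card ?orbT // subfamS ?fset_sub.
Qed.
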